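(* Let $(\hat\sigma(n))_{n\ge0}$ be defined by $\hat\sigma(0)=1$, $\hat\sigma(1)=-\tfrac13$, and for $n\ge1$: $\hat\sigma(2n)=\hat\sigma(n)$, $\hat\sigma(2n+1)=-\tfrac12(\hat\sigma(n)+\hat\sigma(n+1))$. Let $K,L\ge9$ be odd natural numbers. If $K$ and $L$ are TM-equivalent, then $l(K)=l(L)$.
   Context: Two numbers $K,L\ge0$ are TM-equivalent if $\hat\sigma(2K+1)=\hat\sigma(2L+1)$. For odd $K$, $l(K)=a_1+\dots+a_r$ where $K_0=K$, $K_{i-1}=2^{a_i}K_i+1$ with $K_i$ odd, $a_i\ge1$, and $K_r=1$; equivalently $l(K)=\lfloor\log_2K\rfloor$. *)

From mathcomp Require Import all_boot all_order all_algebra.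
Set Implicit Arguments. Unset Strict Implicit. Unset Printing Implicit Defensive.
Import GRing.Theory Num.Theory.
Local Open Scope ring_scope.

(* sigma_hat with fuel: each recursive call is on a strictly smaller argument. *)
Fixpoint sigma_hat_fuel (fuel : nat) (n : nat) : rat :=
  match fuel with
  | 0%N => 0
  | f.+1 =>
    if n == 0%N then 1
    else if n == 1%N then - (1 / 3%:R)
    else if ~~ odd n then sigma_hat_fuel f n./2
    else - (1 / 2%:R) * (sigma_hat_fuel f n./2 + sigma_hat_fuel f (n./2).+1)
  end.

Definition sigma_hat (n : nat) : rat := sigma_hat_fuel n.+1 n.

Definition TM_equiv (K L : nat) : Prop :=
  sigma_hat (2 * K + 1)%N = sigma_hat (2 * L + 1)%N.

(* l(K) for odd K, following the paper: K_{i-1} = 2^{a_i} K_i + 1, K_i odd,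
   K_r = 1, l(K) = a_1 + ... + a_r.  Here a = logn 2 (K-1) is the 2-adic
   valuation of K - 1 and K' = (K-1) / 2^a. *)
Fixpoint l_fuel (fuel : nat) (K : nat) : nat :=
  match fuel with
  | 0%N => 0%N
  | f.+1 =>
    if (K <= 1)%N then 0%N
    else (logn 2 K.-1 + l_fuel f (K.-1 %/ 2 ^ logn 2 K.-1))%N
  end.

Definition l (K : nat) : nat := l_fuel K K.

From mathcomp Require Import all_boot all_order all_algebra zify ring.
Set Implicit Arguments. Unset Strict Implicit. Unset Printing Implicit Defensive.
Import GRing.Theory Num.Theory.
Local Open Scope ring_scope.

(* For 2^(j+3) <= n <= 2^(j+4), the number 3 * 2^(j+1) * sigma_hat n is an
   integer with the parity of n (induction on j: an even index doubles the
   scaled value, an odd index halves the sum of the values at two consecutive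
   indices, of opposite parities).  So for odd n in that range, sigma_hat n has
   2-adic valuation exactly -(j+1).  Since l K = floor(log2 K), the odd number
   2K+1 lies in [2^(l K + 1), 2^(l K + 2)], and the 2-adic valuation of
   sigma_hat (2K+1) recovers l K. *)

Definition int_of_parity (x : rat) (b : bool) : Prop :=
  exists w : int, x = (2 * w + Posz b)%:~R.

Lemma int_of_parityN x b : int_of_parity x b -> int_of_parity (- x) b.
Proof.
move=> [w ->]; exists (- w - Posz b).
by rewrite !(rmorphD, rmorphM, rmorphN, rmorphB) /=; ring.
Qed.

Lemma int_of_parityD x y b c :
  int_of_parity x b -> int_of_parity y c -> int_of_parity (x + y) (b (+) c).
Proof.
move=> [w ->] [v ->]; exists (w + v + Posz (b && c)).
by case: b; case: c; rewrite !(rmorphD, rmorphM) /=; ring.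
Qed.

Lemma int_of_parity_double x b : int_of_parity x b -> int_of_parity (x * 2%:R) false.
Proof.
move=> [w ->]; exists (2 * w + Posz b).
by rewrite !(rmorphD, rmorphM) /=; ring.
Qed.

Lemma int_of_parity_exp2 x b k :
  int_of_parity x b -> int_of_parity (x * (2 ^ k.+1)%:R) false.
Proof.
elim: k => [|k IH] hx; first exact: int_of_parity_double hx.
by rewrite expnS natrM mulrCA mulrC; exact: int_of_parity_double (IH hx).
Qed.

Lemma int_of_parity_uniq x : int_of_parity x true -> ~ int_of_parity x false.
Proof. by move=> [w ->] [v /intr_inj]; lia. Qed.

Lemma half_lt n : (0 < n)%N -> (n./2 < n)%N.
Proof. by have := odd_double_half n; rewrite -muln2; case: odd => /=; lia. Qed.

Lemma half_succ_lt n : (2 < n)%N -> ((n./2).+1 < n)%N.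
Proof. by have := odd_double_half n; rewrite -muln2; case: odd => /=; lia. Qed.

Lemma sigma_hat_fuel_stable f g n :
  (n < f)%N -> (n < g)%N -> sigma_hat_fuel f n = sigma_hat_fuel g n.
Proof.
elim: f g n => [|f IH] [|g] n //= hf hg.
case: eqP => // /eqP n0; case: eqP => // /eqP n1.
have lt_half : (n./2 < n)%N by apply: half_lt; lia.
rewrite (IH g n./2); try lia; case: ifP => // n_odd.
have n_gt2 : (2 < n)%N by move: n_odd n0 n1; case: (n) => [|[|[|]]].
have := half_succ_lt n_gt2.
by rewrite (IH g (n./2).+1) //; lia.
Qed.

Lemma sigma_hatE n : (1 < n)%N ->
  sigma_hat n = if ~~ odd n then sigma_hat n./2
                else - (1 / 2%:R) * (sigma_hat n./2 + sigma_hat (n./2).+1).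
Proof.
move=> n_gt1; rewrite {1}/sigma_hat /=.
case: eqP => [|_]; first lia; case: eqP => [|_]; first lia.
have lt_half : (n./2 < n)%N by apply: half_lt; lia.
rewrite /sigma_hat (@sigma_hat_fuel_stable n (n./2).+1) //; case: ifP => // n_odd.
have n_gt2 : (2 < n)%N by move: n_odd n_gt1; case: (n) => [|[|[|]]].
have := half_succ_lt n_gt2.
by rewrite (@sigma_hat_fuel_stable n (n./2).+2) //; lia.
Qed.

Lemma sigma_hat_double n : (0 < n)%N -> sigma_hat n.*2 = sigma_hat n.
Proof. by move=> n_gt0; rewrite sigma_hatE ?odd_double ?doubleK //; lia. Qed.

Lemma sigma_hat_double_succ n : (0 < n)%N ->
  sigma_hat n.*2.+1 = - (1 / 2%:R) * (sigma_hat n + sigma_hat n.+1).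
Proof.
by move=> n_gt0; rewrite sigma_hatE /= ?odd_double ?uphalf_double //; lia.
Qed.

Lemma sigma_hat_scaled_parity_base n : (2 ^ 3 <= n <= 2 ^ 4)%N ->
  int_of_parity (sigma_hat n * (3 * 2 ^ 1)%:R) (odd n).
Proof.
move=> /andP[n_ge n_le].
have [m -> m_le] : exists2 m, n = (8 + m)%N & (m <= 8)%N by exists (n - 8)%N; lia.
case: m m_le => [|[|[|[|[|[|[|[|[|m]]]]]]]]] m_le; last lia.
- by exists (-1).
- by exists 0.
- by exists 0.
- by exists (-1).
- by exists 1.
- by exists (-1).
- by exists 0.
- by exists 0.
- by exists (-1).
Qed.

Lemma sigma_hat_scaled_parity j n : (2 ^ (j + 3) <= n <= 2 ^ (j + 4))%N ->
  int_of_parity (sigma_hat n * (3 * 2 ^ (j + 1))%:R) (odd n).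
Proof.
elim: j n => [|j IH] n; first exact: sigma_hat_scaled_parity_base.
rewrite !addSn !expnS (mulnCA 3) natrM => n_range.
set X := (3 * 2 ^ (j + 1))%:R.
have pow_gt0 : (0 < 2 ^ (j + 3))%N by rewrite expn_gt0.
have := odd_double_half n; case: (boolP (odd n)) => n_odd /= n_eq.
- have -> : n = (n./2).*2.+1 by lia.
  have lo := IH n./2 ltac:(lia); have hi := IH (n./2).+1 ltac:(lia).
  rewrite sigma_hat_double_succ; last lia.
  have -> : - (1 / 2%:R) * (sigma_hat n./2 + sigma_hat (n./2).+1) * (2%:R * X)
      = - (sigma_hat n./2 * X + sigma_hat (n./2).+1 * X) by field.
  have -> : true = odd n./2 (+) odd (n./2).+1 by rewrite /= addbN addbb.
  by apply/int_of_parityN/int_of_parityD.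
- have -> : n = (n./2).*2 by lia.
  rewrite sigma_hat_double; last lia.
  rewrite mulrCA mulrC.
  by apply: int_of_parity_double (IH n./2 _); lia.
Qed.

Lemma trunc_log2_pow_mul_succ a m : (0 < a)%N -> (0 < m)%N ->
  trunc_log 2 (2 ^ a * m).+1 = (a + trunc_log 2 m)%N.
Proof.
move=> a_gt0 m_gt0; apply: trunc_log_eq => //.
have lo := trunc_logP (isT : 1 < 2)%N m_gt0.
have hi := trunc_log_ltn m (isT : 1 < 2)%N.
have pow_ge2 : (2 <= 2 ^ a)%N by rewrite -[X in (X <= _)%N]expn1 leq_exp2l.
move: lo hi pow_ge2; rewrite !expnS expnD.
set P := (2 ^ a)%N; set Q := (2 ^ trunc_log 2 m)%N; nia.
Qed.

Lemma l_fuel_trunc_log f K : odd K -> (K <= f)%N -> l_fuel f K = trunc_log 2 K.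
Proof.
elim: f K => [|f IH] K K_odd K_le /=.
  by case: K K_odd K_le.
case: ifP => K_le1.
  by have -> : K = 1%N by move: K_odd K_le1; case: (K) => [|[|]].
have K1_gt0 : (0 < K.-1)%N by lia.
have [m m_odd K_eq] := pfactor_coprime (isT : prime 2) K1_gt0.
rewrite coprime2n in m_odd.
set a := logn 2 K.-1 in K_eq *.
have -> : (K.-1 %/ 2 ^ a = m)%N by rewrite K_eq mulnK ?expn_gt0.
have a_gt0 : (0 < a)%N.
  rewrite lt0n; apply/negP => /eqP a0; move: K_eq; rewrite a0 expn0 muln1 => K_eq.
  by move: K_odd; rewrite -[K]prednK ?K_eq ?m_odd //; lia.
have m_gt0 : (0 < m)%N by case: (m) m_odd.
have pow_ge2 : (2 <= 2 ^ a)%N by rewrite -[X in (X <= _)%N]expn1 leq_exp2l.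
rewrite IH //; last nia.
by rewrite -trunc_log2_pow_mul_succ // mulnC -K_eq prednK //; lia.
Qed.

Lemma l_trunc_log K : odd K -> l K = trunc_log 2 K.
Proof. by move=> K_odd; apply: l_fuel_trunc_log. Qed.

Lemma odd_scaled_exponent_uniq (s : rat) d i j :
  int_of_parity (s * (d * 2 ^ i)%:R) true ->
  int_of_parity (s * (d * 2 ^ j)%:R) true -> i = j.
Proof.
have lt_contra i' j' : (i' < j')%N -> int_of_parity (s * (d * 2 ^ i')%:R) true ->
    ~ int_of_parity (s * (d * 2 ^ j')%:R) true.
  move=> lt_ij hi'; have -> : j' = (i' + (j' - i').-1.+1)%N by lia.
  rewrite expnD mulnA natrM mulrA => hj'.
  exact: int_of_parity_uniq hj' (int_of_parity_exp2 _ hi').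
by move=> hi hj; case: (ltngtP i j) => // [/lt_contra/(_ hi hj) | /lt_contra/(_ hj hi)].
Qed.

Lemma l_ge3 K : (9 <= K)%N -> odd K -> (3 <= l K)%N.
Proof. by move=> K_ge K_odd; rewrite l_trunc_log // trunc_log_max //; lia. Qed.

Lemma sigma_hat_2K1_scaled_odd K : (9 <= K)%N -> odd K ->
  int_of_parity (sigma_hat (2 * K + 1) * (3 * 2 ^ (l K).-1)%:R) true.
Proof.
move=> K_ge K_odd; have K_gt0 : (0 < K)%N by lia.
have := l_ge3 K_ge K_odd.
have := trunc_logP (isT : 1 < 2)%N K_gt0.
have := trunc_log_ltn K (isT : 1 < 2)%N.
rewrite l_trunc_log //; set t := trunc_log 2 K => K_lt K_ge_pow t_ge3.
have -> : t.-1 = (t - 2 + 1)%N by lia.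
have := @sigma_hat_scaled_parity (t - 2) (2 * K + 1).
rewrite oddD oddM /=; apply.
have -> : (t - 2 + 3 = t.+1)%N by lia.
have -> : (t - 2 + 4 = t.+2)%N by lia.
by move: K_lt K_ge_pow; rewrite !expnS; lia.
Qed.

Theorem lemma4p5 (K L : nat) :
  (9 <= K)%N -> (9 <= L)%N -> odd K -> odd L ->
  TM_equiv K L -> l K = l L.
Proof.
move=> K_ge L_ge K_odd L_odd KL.
have hK := sigma_hat_2K1_scaled_odd K_ge K_odd; rewrite KL in hK.
have hL := sigma_hat_2K1_scaled_odd L_ge L_odd.
have := odd_scaled_exponent_uniq hK hL.
have := l_ge3 K_ge K_odd; have := l_ge3 L_ge L_odd; lia.
Qed.
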